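(* Let $n\ge2$, $k\in\{1,\dots,n\}$ and let $W_1,\dots,W_n$ be the Pauli strings on $n-1$ qubits defined in the context. For $1\le m<k$ let $G_m=iW_{m+1}W_m$, and for $k\le m<n$ let $G_m=iW_mW_{m+1}$; for any real $\theta$ let $R_m=\exp(-i\theta G_m/2)$. Then for $1\le m<k$ we have $R_mW_jR_m^\dagger=W_j$ for every $j$ with $m+1<j\le n$; and for $k\le m<n$ we have $R_mW_jR_m^\dagger=W_j$ for every $j$ with $1\le j<k$.
   Context: $X_j,Y_j,Z_j$ are Pauli operators on qubit $j$ of an $(n-1)$-qubit system; empty products of $Z$'s are the identity. For $k\ne n$: for $1\le j<k$, $W_j=Y_jZ_{j+1}\cdots Z_{k-1}Y_k$; $W_k=Z_k$; for $k<j<n$, $W_j=X_kZ_{k+1}\cdots Z_{j-1}X_j$; and $W_n=X_kZ_{k+1}\cdots Z_{n-1}$. For $k=n$: for $1\le j<n$, $W_j=-Z_1Z_2\cdots Z_{j-1}X_j$; $W_n=\prod_{j=1}^{n-1}Z_j$. *)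

From mathcomp Require Import all_boot all_algebra.
From mathcomp Require Import all_classical all_reals all_analysis.
From mathcomp Require Import complex.
Import GRing.Theory Num.Theory numFieldNormedType.Exports.

Set Implicit Arguments.
Unset Strict Implicit.
Unset Printing Implicit Defensive.

Local Open Scope ring_scope.

Inductive pauli := PI | PX | PY | PZ.

Section Defs.
Variable R : realType.

Definition pauli_mx (p : pauli) : 'M[R[i]]_2 :=
  match p with
  | PI => 1%:M
  | PX => \matrix_(a < 2, b < 2) (if (a : nat) != b then 1 else 0)
  | PY => \matrix_(a < 2, b < 2)
            (if ((a : nat) == 0%N) && ((b : nat) == 1%N) then - 'i%C
             else if ((a : nat) == 1%N) && ((b : nat) == 0%N) then 'i%C else 0)
  | PZ => \matrix_(a < 2, b < 2)
            (if (a : nat) == b then (if (a : nat) == 0%N then 1 else -1) else 0)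
  end.

(* the j-th bit of a basis index a : 'I_(2^q) (qubit j+1 <-> bit j) *)
Definition bit (q : nat) (a : 'I_(2 ^ q)) (j : 'I_q) : 'I_2 :=
  inord ((a %/ 2 ^ j) %% 2).

(* Pauli string (tensor product) on q qubits; position j : 'I_q is qubit j+1 *)
Definition pstring (q : nat) (s : 'I_q -> pauli) : 'M[R[i]]_(2 ^ q) :=
  \matrix_(a, b) \prod_(j < q) pauli_mx (s j) (bit a j) (bit b j).

(* letter of W_j on qubit l (1-based, 1 <= l <= n-1), as in the context *)
Definition Wletter (n k j l : nat) : pauli :=
  if k != n then
    if (j < k)%N then
      (if (l == j) || (l == k) then PY else if (j < l < k)%N then PZ else PI)
    else if j == k then (if l == k then PZ else PI)
    else if (j < n)%N then
      (if (l == k) || (l == j) then PX else if (k < l < j)%N then PZ else PI)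
    else
      (if l == k then PX else if (k < l)%N then PZ else PI)
  else
    if (j < n)%N then
      (if (l < j)%N then PZ else if l == j then PX else PI)
    else PZ.

Definition W (n k j : nat) : 'M[R[i]]_(2 ^ (n - 1)) :=
  (if (k == n) && (j < n)%N then -1 else 1) *:
    pstring (fun l : 'I_(n - 1) => Wletter n k j l.+1).

Definition adjmx (m : nat) (A : 'M[R[i]]_m) : 'M[R[i]]_m :=
  (map_mx (@conjc R) A)^T.

(* matrix powers and the matrix exponential as the limit of the power series
   sum_t A^t / t!, taken entrywise (real and imaginary parts) *)
Definition mxpow (m : nat) (A : 'M[R[i]]_m) (t : nat) : 'M[R[i]]_m :=
  iter t (mulmx A) 1%:M.

Definition exp_partial (m : nat) (A : 'M[R[i]]_m) (N : nat) : 'M[R[i]]_m :=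
  \sum_(t < N) (t`!%:R)^-1 *: mxpow A t.

Definition expmx (m : nat) (A : 'M[R[i]]_m) : 'M[R[i]]_m :=
  \matrix_(a, b)
    ((limn (fun N => complex.Re (exp_partial A N a b)))
       +i* (limn (fun N => complex.Im (exp_partial A N a b))))%C.

Definition Gen (n k m : nat) : 'M[R[i]]_(2 ^ (n - 1)) :=
  if (m < k)%N then 'i%C *: (W n k m.+1 *m W n k m)
  else 'i%C *: (W n k m *m W n k m.+1).

Definition Rot (n k : nat) (theta : R) (m : nat) : 'M[R[i]]_(2 ^ (n - 1)) :=
  expmx (- ('i%C * (theta%:C)%C / 2) *: Gen n k m).

End Defs.

From mathcomp Require Import all_boot all_algebra.
From mathcomp Require Import all_classical all_reals all_analysis.
From mathcomp Require Import complex.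
From mathcomp Require Import zify ring.
Import GRing.Theory Num.Theory numFieldNormedType.Exports.
Local Open Scope ring_scope.
Local Open Scope complex_scope.
Set Implicit Arguments.
Unset Strict Implicit.
Unset Printing Implicit Defensive.

(* Each W_j is a sign times a Pauli string, hence a hermitian involution, and two Pauli
   strings commute up to the sign (-1)^a, where a is the number of qubits on which their
   letters anticommute.  The two factors of a generator G_m anticommute (there is exactly
   one such qubit), so G_m is itself a hermitian involution and
   R_m = cos(theta/2) - i sin(theta/2) G_m is unitary.  For the listed j, W_j either
   commutes with both factors of G_m or anticommutes with both, so it commutes with G_m,
   hence with R_m, and R_m W_j R_m^+ = W_j R_m R_m^+ = W_j. *)

Lemma nat_bits_inj q (a b : nat) : (a < 2 ^ q)%N -> (b < 2 ^ q)%N ->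
  (forall j, (j < q)%N -> (a %/ 2 ^ j) %% 2 = (b %/ 2 ^ j) %% 2)%N -> a = b.
Proof.
elim: q a b => [|q IH] a b.
  by rewrite expn0 !ltnS !leqn0 => /eqP-> /eqP->.
move=> ha hb eq_bits; rewrite (divn_eq a 2) (divn_eq b 2).
have := eq_bits 0%N isT; rewrite !expn0 !divn1 => ->; congr (_ * _ + _)%N.
apply: IH; rewrite ?ltn_divLR -?expnSr // => j ltjq.
by rewrite -!divnMA -expnS; exact: eq_bits.
Qed.

Definition bits q (a : 'I_(2 ^ q)) : {ffun 'I_q -> 'I_2} := [ffun j => bit a j].

Lemma bits_bij q : bijective (@bits q).
Proof.
have bits_inj : injective (@bits q).
  move=> a b /ffunP eq_ab; apply/val_inj/(nat_bits_inj (ltn_ord a) (ltn_ord b)).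
  move=> j ltjq; have /(congr1 val) := eq_ab (Ordinal ltjq).
  by rewrite !ffunE /bit /= !inordK ?ltn_pmod.
by apply: inj_card_bij bits_inj _; rewrite card_ffun !card_ord.
Qed.

Section Tensor.
Variable R : comNzRingType.

Definition ptensor q (M : 'I_q -> 'M[R]_2) : 'M[R]_(2 ^ q) :=
  \matrix_(a, b) \prod_(j < q) M j (bit a j) (bit b j).

Lemma ptensorM q (M N : 'I_q -> 'M[R]_2) :
  ptensor M *m ptensor N = ptensor (fun j => M j *m N j).
Proof.
apply/matrixP => a c; rewrite !mxE.
under [RHS]eq_bigr do rewrite mxE.
rewrite bigA_distr_bigA /= (reindex (@bits q)) /=; last exact/onW_bij/bits_bij.
apply: eq_bigr => b _.
by rewrite !mxE -big_split; apply: eq_bigr => j _; rewrite ffunE.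
Qed.

Lemma ptensorZ q (c : 'I_q -> R) (M : 'I_q -> 'M[R]_2) :
  ptensor (fun j => c j *: M j) = (\prod_j c j) *: ptensor M.
Proof.
by apply/matrixP => a b; rewrite !mxE -big_split; apply: eq_bigr => j _; rewrite mxE.
Qed.

Lemma ptensor1 q : ptensor (fun _ : 'I_q => 1%:M) = 1%:M.
Proof.
apply/matrixP => a b; rewrite !mxE.
have [->|neq_ab] := eqVneq a b; first by rewrite big1 // => j _; rewrite mxE eqxx.
have [j neq_j] : exists j, bit a j != bit b j.
  apply/existsP; move: neq_ab; apply: contraR; rewrite negb_exists => /forallP eq_ab.
  by apply/eqP/(bij_inj (@bits_bij q))/ffunP => j; rewrite !ffunE; apply/eqP/negPn.
by rewrite (bigD1 j) //= mxE (negbTE neq_j) mul0r.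
Qed.
End Tensor.

Lemma ptensor_adj (R : realType) q (M : 'I_q -> 'M[R[i]]_2) :
  adjmx (ptensor M) = ptensor (fun j => adjmx (M j)).
Proof. by apply/matrixP => a b; rewrite !mxE rmorph_prod; apply: eq_bigr => j _; rewrite !mxE. Qed.

Definition pauli_anti (p r : pauli) : bool :=
  match p, r with
  | PI, _ | _, PI | PX, PX | PY, PY | PZ, PZ => false
  | _, _ => true
  end.

Section Pauli.
Variable R : realType.

Lemma pauli_mx_sq p : pauli_mx R p *m pauli_mx R p = 1%:M.
Proof.
apply/matrixP => x y; case: p; rewrite /= !mxE !big_ord_recl !big_ord0 ?mxE;
by case: x => [[|[|?]] ?] //; case: y => [[|[|?]] ?] //=; rewrite ?mxE /=; simpc.
Qed.

Lemma pauli_mx_adj p : adjmx (pauli_mx R p) = pauli_mx R p.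
Proof.
apply/matrixP => x y; case: p; rewrite /adjmx /= !mxE;
by case: x => [[|[|?]] ?] //; case: y => [[|[|?]] ?] //=; rewrite ?mxE /=; simpc.
Qed.

Lemma pauli_mx_comm p r : pauli_mx R p *m pauli_mx R r =
  (-1) ^+ pauli_anti p r *: (pauli_mx R r *m pauli_mx R p).
Proof.
have i2 : 'i%C * 'i%C = -1 :> R[i] by rewrite -expr2 sqr_i.
apply/matrixP => x y; case: p; case: r; rewrite /= !mxE !big_ord_recl !big_ord0 ?mxE;
case: x => [[|[|?]] ?] //; case: y => [[|[|?]] ?] //=; rewrite ?mxE /=;
by rewrite ?(mul0r, mulr0, add0r, addr0, mul1r, mulr1, mulN1r, mulrN1, mulrN, mulNr, opprK, i2, oppr0).
Qed.

Lemma pstringE q (s : 'I_q -> pauli) :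
  pstring R s = ptensor (fun j => pauli_mx R (s j)).
Proof. by []. Qed.

Lemma pstring_sq q (s : 'I_q -> pauli) : pstring R s *m pstring R s = 1%:M.
Proof.
rewrite pstringE ptensorM -[RHS]ptensor1.
by congr ptensor; apply/funext => j; rewrite pauli_mx_sq.
Qed.

Lemma pstring_adj q (s : 'I_q -> pauli) : adjmx (pstring R s) = pstring R s.
Proof. by rewrite pstringE ptensor_adj; congr ptensor; apply/funext => j; rewrite pauli_mx_adj. Qed.

Lemma pstring_comm q (s t : 'I_q -> pauli) : pstring R s *m pstring R t =
  (\prod_j (-1) ^+ pauli_anti (s j) (t j)) *: (pstring R t *m pstring R s).
Proof.
rewrite !pstringE !ptensorM -ptensorZ.
by congr ptensor; apply/funext => j; rewrite pauli_mx_comm.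
Qed.
End Pauli.

Section Adjoint.
Variables (R : realType) (N : nat).
Implicit Types (A B : 'M[R[i]]_N) (c : R[i]).

Lemma adjmxD A B : adjmx (A + B) = adjmx A + adjmx B.
Proof. by apply/matrixP => a b; rewrite !mxE rmorphD. Qed.

Lemma adjmxZ c A : adjmx (c *: A) = conjc c *: adjmx A.
Proof. by apply/matrixP => a b; rewrite !mxE rmorphM. Qed.

Lemma adjmx1 : adjmx (1%:M : 'M[R[i]]_N) = 1%:M.
Proof. by apply/matrixP => a b; rewrite !mxE eq_sym rmorph_nat. Qed.

Lemma adjmxM A B : adjmx (A *m B) = adjmx B *m adjmx A.
Proof. by rewrite /adjmx map_mxM trmx_mul. Qed.
End Adjoint.

Section Exponential.
Variable R : realType.
Local Notation C := R[i].

Lemma euler_coeff (phi : R) t :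
  (t`!%:R)^-1 * (- ('i%C * phi%:C)) ^+ t = (cos_coeff phi t)%:C - 'i%C * (sin_coeff phi t)%:C :> C.
Proof.
have sqr_Ni : (- ('i%C * phi%:C)) ^+ 2 = - phi%:C ^+ 2 :> C.
  by rewrite sqrrN exprMn sqr_i mulN1r.
rewrite -[t](odd_double_half t); move: t./2 => s; case: (odd t); rewrite /= ?add0n ?add1n.
- rewrite cos_coeff_odd sin_coeffE /= odd_double /= doubleK -!mul2n.
  rewrite !rmorphM /= !rmorphXn /= rmorphN1 fmorphV /= ?rmorph_nat /= ?rmorph0.
  by rewrite !exprS !exprM sqr_Ni exprNn; ring.
- rewrite sin_coeff_even cos_coeffE /= odd_double /= doubleK -!mul2n.
  rewrite !rmorphM /= !rmorphXn /= rmorphN1 fmorphV /= ?rmorph_nat /= ?rmorph0.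
  by rewrite !exprM sqr_Ni exprNn; ring.
Qed.

Lemma limn_ReIm_lincomb (z : nat -> C) (u v : R^nat) (a b : R) (p q : C) :
  (forall K, z K = (u K)%:C * p + (v K)%:C * q) ->
  (u @ \oo --> a)%classic -> (v @ \oo --> b)%classic ->
  limn (fun K => complex.Re (z K)) +i* limn (fun K => complex.Im (z K)) =
  a%:C * p + b%:C * q.
Proof.
move=> zE ua vb; case: p q zE => [p1 p2] [q1 q2] zE.
have -> : (fun K => complex.Re (z K)) = fun K => u K * p1 + v K * q1.
  by apply/funext => K; rewrite zE; simpc.
have -> : (fun K => complex.Im (z K)) = fun K => u K * p2 + v K * q2.
  by apply/funext => K; rewrite zE; simpc.
rewrite !(cvg_lim (@Rhausdorff R) (cvgD (cvgMr_tmp ua) (cvgMr_tmp vb))).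
by simpc.
Qed.

Lemma cvg_series_cos_coeff (x : R) : (series (cos_coeff x) @ \oo --> cos x)%classic.
Proof. by rewrite cos.unlock; exact: is_cvg_series_cos_coeff. Qed.

Lemma cvg_series_sin_coeff (x : R) : (series (sin_coeff x) @ \oo --> sin x)%classic.
Proof. by rewrite sin.unlock; exact: is_cvg_series_sin_coeff. Qed.

Variables (N : nat) (G : 'M[C]_N).
Hypothesis GG : G *m G = 1%:M.

Lemma mxpow_involution c t : mxpow (c *: G) t = c ^+ t *: (if odd t then G else 1%:M).
Proof.
elim: t => [|t IH]; first by rewrite /mxpow /= expr0 scale1r.
rewrite /mxpow iterS -/(mxpow _ t) IH -scalemxAl -scalemxAr scalerA -exprS.
by rewrite -[odd t.+1]/(~~ odd t); case: (odd t); rewrite /= ?GG ?mulmx1.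
Qed.

Lemma exp_partial_involution (phi : R) K : exp_partial (- ('i%C * phi%:C) *: G) K =
  (series (cos_coeff phi) K)%:C *: 1%:M - ('i%C * (series (sin_coeff phi) K)%:C) *: G.
Proof.
rewrite /exp_partial /series /= !big_mkord !rmorph_sum mulr_sumr !scaler_suml -sumrB.
apply: eq_bigr => t _.
rewrite mxpow_involution scalerA euler_coeff.
case: (boolP (odd t)) => [odd_t|even_t].
  have -> : cos_coeff phi t = 0 by rewrite /cos_coeff /= odd_t !mul0r.
  by rewrite !rmorph0 scale0r !sub0r scaleNr.
have -> : sin_coeff phi t = 0 by rewrite /sin_coeff /= (negbTE even_t) !mul0r.
by rewrite !rmorph0 mulr0 !subr0 scale0r subr0.
Qed.

Lemma expmx_involution (phi : R) :
  expmx (- ('i%C * phi%:C) *: G) = (cos phi)%:C *: 1%:M - ('i%C * (sin phi)%:C) *: G.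
Proof.
apply/matrixP => a b; rewrite !mxE.
rewrite (_ : _ - _ = (cos phi)%:C * (a == b)%:R + (sin phi)%:C * (- 'i%C * G a b)); last by ring.
apply: (limn_ReIm_lincomb (z := fun K => exp_partial (- ('i%C * phi%:C) *: G) K a b));
  [move=> K | exact: cvg_series_cos_coeff | exact: cvg_series_sin_coeff].
by rewrite exp_partial_involution !mxE; ring.
Qed.

Lemma mulmx_involution_comb (a b c d : C) :
  (a *: 1%:M + b *: G) *m (c *: 1%:M + d *: G) = (a * c + b * d) *: 1%:M + (a * d + b * c) *: G.
Proof.
rewrite mulmxDl !mulmxDr -!scalemxAl -!scalemxAr !mul1mx !mulmx1 GG !scalerA !scalerDl.
by rewrite [(b * c) *: G + _]addrC addrACA.
Qed.

Hypothesis G_adj : adjmx G = G.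

Lemma expmx_unitary (phi : R) :
  expmx (- ('i%C * phi%:C) *: G) *m adjmx (expmx (- ('i%C * phi%:C) *: G)) = 1%:M.
Proof.
rewrite expmx_involution -scaleNr adjmxD !adjmxZ adjmx1 G_adj conjc_real.
have -> : (- ('i%C * (sin phi)%:C))^* = 'i%C * (sin phi)%:C by simpc.
rewrite mulmx_involution_comb.
transitivity (1 *: 1%:M + 0 *: G); last by rewrite scale1r scale0r addr0.
congr (_ *: _ + _ *: _); last by ring.
rewrite (_ : _ + _ = (cos phi ^+ 2 + sin phi ^+ 2)%:C); first by rewrite cos2Dsin2.
have i2 : 'i%C * 'i%C = -1 :> C by rewrite -expr2 sqr_i.
rewrite rmorphD !rmorphXn (_ : - _ * _ = - ('i%C * 'i%C) * (sin phi)%:C ^+ 2); last by ring.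
by rewrite i2; ring.
Qed.

Lemma expmx_conj_commute (theta : R) (V : 'M[C]_N) : G *m V = V *m G ->
  let U := expmx (- ('i%C * theta%:C / 2) *: G) in U *m V *m adjmx U = V.
Proof.
move=> GV; rewrite /= -mulrA -(rmorph_nat (@real_complex R) 2) -fmorphV -rmorphM.
have UV : expmx (- ('i%C * (theta / 2)%:C) *: G) *m V = V *m expmx (- ('i%C * (theta / 2)%:C) *: G).
  by rewrite expmx_involution mulmxDl mulmxDr mulNmx mulmxN -!scalemxAl -!scalemxAr mul1mx mulmx1 GV.
by rewrite UV -mulmxA expmx_unitary mulmx1.
Qed.
End Exponential.

Section Generator.
Variables (R : realType) (N : nat) (A B : 'M[R[i]]_N).
Hypotheses (AA : A *m A = 1%:M) (BB : B *m B = 1%:M).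
Hypotheses (A_adj : adjmx A = A) (B_adj : adjmx B = B).
Hypothesis AB_anti : A *m B = - (B *m A).

Lemma gen_involution : ('i%C *: (A *m B)) *m ('i%C *: (A *m B)) = 1%:M.
Proof.
have BA_anti : B *m A = - (A *m B) by rewrite AB_anti opprK.
rewrite -scalemxAl -scalemxAr scalerA -expr2 sqr_i scaleN1r mulmxA -(mulmxA A B A).
by rewrite BA_anti mulmxN mulNmx opprK mulmxA AA mul1mx BB.
Qed.

Lemma gen_adj : adjmx ('i%C *: (A *m B)) = 'i%C *: (A *m B).
Proof.
rewrite adjmxZ adjmxM A_adj B_adj AB_anti scalerN -scaleNr; congr (_ *: _).
by apply/eqP; rewrite eq_complex /= oppr0 !eqxx.
Qed.

Lemma gen_commute (V : 'M[R[i]]_N) (s t : R[i]) :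
  V *m A = s *: (A *m V) -> V *m B = t *: (B *m V) -> s * t = 1 ->
  ('i%C *: (A *m B)) *m V = V *m ('i%C *: (A *m B)).
Proof.
move=> VA VB st1; rewrite -scalemxAl -scalemxAr; congr (_ *: _).
rewrite [RHS]mulmxA VA -scalemxAl -[A *m V *m B]mulmxA VB -scalemxAr.
by rewrite scalerA st1 scale1r mulmxA.
Qed.
End Generator.

Section Strings.
Variables (R : realType) (n k : nat).

Definition Wsign x y : R[i] :=
  \prod_(l < n - 1) (-1) ^+ pauli_anti (Wletter n k x l.+1) (Wletter n k y l.+1).

Lemma W_sq j : W R n k j *m W R n k j = 1%:M.
Proof.
rewrite /W -scalemxAl -scalemxAr scalerA pstring_sq.
by case: ifP => _; rewrite ?mulrNN mulr1 scale1r.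
Qed.

Lemma W_adj j : adjmx (W R n k j) = W R n k j.
Proof. by rewrite /W adjmxZ pstring_adj; case: ifP => _; rewrite ?rmorphN rmorph1. Qed.

Lemma W_comm x y : W R n k x *m W R n k y = Wsign x y *: (W R n k y *m W R n k x).
Proof.
rewrite /W -!scalemxAl -!scalemxAr !scalerA pstring_comm scalerA; congr (_ *: _).
by rewrite mulrC -[RHS]mulrA [_ * (if _ then _ else _)]mulrC.
Qed.

Lemma rot_fixes_W x y j (theta : R) :
  Wsign x y = -1 -> Wsign j x * Wsign j y = 1 ->
  let U := expmx (- ('i%C * theta%:C / 2) *: ('i%C *: (W R n k x *m W R n k y))) in
  U *m W R n k j *m adjmx U = W R n k j.
Proof.
move=> sign_xy sign_j.
have anti_xy : W R n k x *m W R n k y = - (W R n k y *m W R n k x).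
  by rewrite W_comm sign_xy scaleN1r.
apply: expmx_conj_commute.
- exact: gen_involution (W_sq x) (W_sq y) anti_xy.
- exact: gen_adj (W_adj x) (W_adj y) anti_xy.
- exact: gen_commute (W_comm j x) (W_comm j y) sign_j.
Qed.
End Strings.

(* Infeasible branches are discarded as soon as they arise, which keeps the split small. *)
Ltac Wletter_cases :=
  rewrite /Wletter; repeat (case: ifP => ?; try (exfalso; lia));
  repeat (case: eqP => ?; try (exfalso; lia)); done.

Section Letters.
Variables n k : nat.
Hypothesis k_range : (1 <= k <= n)%N.

Lemma anti_Wletter_lo m l : (1 <= m < k)%N -> (1 <= l < n)%N ->
  pauli_anti (Wletter n k m.+1 l) (Wletter n k m l) = (l == if k == n then m else m.+1).
Proof. by move: k_range => *; Wletter_cases. Qed.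

Lemma anti_Wletter_hi m l : (k <= m < n)%N -> (1 <= l < n)%N ->
  pauli_anti (Wletter n k m l) (Wletter n k m.+1 l) = (l == m).
Proof. by move: k_range => *; Wletter_cases. Qed.

Lemma anti_Wletter_lo_fixed m j l : (1 <= m < k)%N -> (m.+1 < j <= n)%N -> (1 <= l < n)%N ->
  pauli_anti (Wletter n k j l) (Wletter n k m.+1 l) (+) pauli_anti (Wletter n k j l) (Wletter n k m l)
  = (k == n) && ((l == m) (+) (l == m.+1)).
Proof. by move: k_range => *; Wletter_cases. Qed.

Lemma anti_Wletter_hi_fixed m j l : (k <= m < n)%N -> (1 <= j < k)%N -> (1 <= l < n)%N ->
  pauli_anti (Wletter n k j l) (Wletter n k m l) (+) pauli_anti (Wletter n k j l) (Wletter n k m.+1 l)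
  = false.
Proof. by move: k_range => *; Wletter_cases. Qed.
End Letters.

Lemma prod_sign_indicator (C : comPzRingType) N x : (0 < x <= N)%N ->
  \prod_(l < N) (-1) ^+ (l.+1 == x) = -1 :> C.
Proof.
case/andP=> x_gt0 x_le; have lt_x : (x.-1 < N)%N by rewrite prednK.
rewrite (bigD1 (Ordinal lt_x)) //= big1 => [|l ne_l]; first by rewrite prednK // eqxx mulr1.
by rewrite (_ : _ == _ = false) //; apply: contraNF ne_l => /eqP eq_x; rewrite -val_eqE /= -eq_x.
Qed.

Section Signs.
Variables (R : realType) (n k : nat).
Hypothesis k_range : (1 <= k <= n)%N.
Local Notation Wsign := (@Wsign R n k).

Lemma qubit_range (l : 'I_(n - 1)) : (1 <= l.+1 < n)%N.
Proof. by have := ltn_ord l; lia. Qed.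

Lemma Wsign_lo m : (1 <= m < k)%N -> Wsign m.+1 m = -1.
Proof.
move=> m_lo; rewrite /Wsign.
under eq_bigr => l _ do rewrite anti_Wletter_lo ?qubit_range //.
by apply: prod_sign_indicator; case: eqP; lia.
Qed.

Lemma Wsign_hi m : (k <= m < n)%N -> Wsign m m.+1 = -1.
Proof.
move=> m_hi; rewrite /Wsign.
under eq_bigr => l _ do rewrite anti_Wletter_hi ?qubit_range //.
by apply: prod_sign_indicator; lia.
Qed.

Lemma Wsign_lo_fixed m j : (1 <= m < k)%N -> (m.+1 < j <= n)%N -> Wsign j m.+1 * Wsign j m = 1.
Proof.
move=> m_lo j_hi; rewrite /Wsign -big_split /=.
under eq_bigr => l _ do rewrite -signr_addb anti_Wletter_lo_fixed ?qubit_range //.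
have [kn|] := eqVneq k n; last by move=> _; rewrite big1.
under eq_bigr => l _ do rewrite signr_addb.
by rewrite big_split /= !prod_sign_indicator ?mulrNN ?mulr1 //; lia.
Qed.

Lemma Wsign_hi_fixed m j : (k <= m < n)%N -> (1 <= j < k)%N -> Wsign j m * Wsign j m.+1 = 1.
Proof.
move=> m_hi j_lo; rewrite /Wsign -big_split /=.
by rewrite big1 // => l _; rewrite -signr_addb anti_Wletter_hi_fixed ?qubit_range.
Qed.
End Signs.

Theorem lemma5 (R : realType) (n k : nat) (theta : R) :
  (2 <= n)%N -> (1 <= k <= n)%N ->
  (forall m : nat, (1 <= m < k)%N -> forall j : nat, (m.+1 < j <= n)%N ->
     Rot n k theta m *m W R n k j *m adjmx (Rot n k theta m) = W R n k j) /\
  (forall m : nat, (k <= m < n)%N -> forall j : nat, (1 <= j < k)%N ->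
     Rot n k theta m *m W R n k j *m adjmx (Rot n k theta m) = W R n k j).
Proof.
move=> _ k_range; split=> m m_range j j_range; rewrite /Rot /Gen.
- rewrite ifT; last by case/andP: m_range.
  by apply: rot_fixes_W; [apply: Wsign_lo | apply: Wsign_lo_fixed].
- rewrite ifF; last by apply/negbTE; rewrite -leqNgt; case/andP: m_range.
  by apply: rot_fixes_W; [apply: Wsign_hi | apply: Wsign_hi_fixed].
Qed.
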